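(* Let $X$ be a Baire space, $Y$ a topological space, $(Z,d)$ a metric space and $f:X\times Y\to Z$ a mapping. Suppose $f^y$ is quasicontinuous for every $y\in Y$, and there is a dense set $D\subset Y$ such that for every $y\in D$: (i) there is a dense Baire subspace $Q_y$ of $X$ such that $f_x$ is cliquish at $y$ for every $x\in Q_y$, and (ii) some neighborhood of $y$ in $Y$ has a countable pseudobase. Then $f$ is cliquish (at every point of $X\times Y$).
   Context: $f_x(y)=f^y(x)=f(x,y)$. A mapping $g$ is quasicontinuous at $a$ if for each neighborhood $U$ of $a$ and neighborhood $W$ of $g(a)$ there is an open $O$ with $\emptyset\ne O\subset U$ and $g(O)\subset W$; quasicontinuous means at every point. A mapping $g$ from a space $T$ into $(Z,d)$ is cliquish at $t$ if for each $\varepsilon>0$ and each neighborhood $U$ of $t$ there is an open $O$ with $\emptyset\ne O\subset U$ and $\mathrm{diam}(g(O))\le\varepsilon$; cliquish means at every point (for $f$, with $T=X\times Y$ with the product topology). A pseudobase of a space is a collection of nonempty open sets such that every nonempty open set contains one of them. *)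

From Stdlib Require Import Reals Lra Classical.
Open Scope R_scope.

Record topology (X : Type) := Topology {
  open : (X -> Prop) -> Prop;
  open_full : open (fun _ => True);
  open_inter : forall A B, open A -> open B -> open (fun x => A x /\ B x);
  open_union : forall F : (X -> Prop) -> Prop,
      (forall A, F A -> open A) -> open (fun x => exists A, F A /\ A x)
}.
Arguments open {X} t A.

Definition nbhd {X} (t : topology X) (a : X) (N : X -> Prop) : Prop :=
  exists O, open t O /\ O a /\ forall x, O x -> N x.

Definition dense {X} (t : topology X) (D : X -> Prop) : Prop :=
  forall O, open t O -> (exists x, O x) -> exists x, O x /\ D x.

Definition baire {X} (t : topology X) : Prop :=
  forall G : nat -> X -> Prop,
    (forall n, open t (G n) /\ dense t (G n)) ->
    dense t (fun x => forall n, G n x).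

Definition sub_open {X} (t : topology X) (Q : X -> Prop)
  (A : {x | Q x} -> Prop) : Prop :=
  exists O, open t O /\ forall q : {x | Q x}, A q <-> O (proj1_sig q).

Lemma sub_open_full {X} (t : topology X) Q : sub_open t Q (fun _ => True).
Proof. exists (fun _ => True); split; [apply open_full | tauto]. Qed.

Lemma sub_open_inter {X} (t : topology X) Q A B :
  sub_open t Q A -> sub_open t Q B -> sub_open t Q (fun x => A x /\ B x).
Proof.
  intros [O1 [H1 E1]] [O2 [H2 E2]].
  exists (fun x => O1 x /\ O2 x); split; [apply open_inter; auto|].
  intros q; rewrite E1, E2; tauto.
Qed.

Lemma sub_open_union {X} (t : topology X) Q (F : ({x | Q x} -> Prop) -> Prop) :
  (forall A, F A -> sub_open t Q A) -> sub_open t Q (fun x => exists A, F A /\ A x).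
Proof.
  intros HF.
  exists (fun x => exists O, (open t O /\ forall q : {x | Q x},
             O (proj1_sig q) -> exists A, F A /\ A q) /\ O x).
  split.
  - apply open_union; intros O [HO _]; exact HO.
  - intros q; split.
    + intros [A [FA Aq]]. destruct (HF A FA) as [O [HO E]].
      exists O; split; [split; [exact HO|]|].
      * intros q' Oq'; exists A; split; [exact FA| apply E; exact Oq'].
      * apply E; exact Aq.
    + intros [O [[_ HO] Oq]]. apply HO; exact Oq.
Qed.

Definition subspace {X} (t : topology X) (Q : X -> Prop) : topology {x | Q x} :=
  @Topology _ (sub_open t Q) (sub_open_full t Q) (sub_open_inter t Q)
           (sub_open_union t Q).

Definition prod_open {X Y} (tX : topology X) (tY : topology Y)
  (W : X * Y -> Prop) : Prop :=
  forall p, W p -> exists A B, open tX A /\ open tY B /\ A (fst p) /\ B (snd p) /\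
     forall x y, A x -> B y -> W (x, y).

Lemma prod_open_full {X Y} tX tY : @prod_open X Y tX tY (fun _ => True).
Proof.
  intros p _; exists (fun _ => True), (fun _ => True);
  repeat split; auto using open_full.
Qed.

Lemma prod_open_inter {X Y} tX tY A B :
  @prod_open X Y tX tY A -> prod_open tX tY B ->
  prod_open tX tY (fun x => A x /\ B x).
Proof.
  intros HA HB p [Ap Bp].
  destruct (HA p Ap) as [A1 [B1 [oa1 [ob1 [a1 [b1 K1]]]]]].
  destruct (HB p Bp) as [A2 [B2 [oa2 [ob2 [a2 [b2 K2]]]]]].
  exists (fun x => A1 x /\ A2 x), (fun y => B1 y /\ B2 y).
  repeat split; try apply open_inter; auto; firstorder.
Qed.

Lemma prod_open_union {X Y} tX tY (F : (X * Y -> Prop) -> Prop) :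
  (forall A, F A -> prod_open tX tY A) ->
  prod_open tX tY (fun x => exists A, F A /\ A x).
Proof.
  intros HF p [A [FA Ap]].
  destruct (HF A FA p Ap) as [A1 [B1 [? [? [? [? H1]]]]]].
  exists A1, B1; repeat split; auto.
  intros x y Ax By; exists A; split; auto.
Qed.

Definition product {X Y} (tX : topology X) (tY : topology Y) : topology (X * Y) :=
  @Topology _ (prod_open tX tY) (prod_open_full tX tY) (prod_open_inter tX tY)
           (prod_open_union tX tY).

Record metric (Z : Type) := Metric {
  dist : Z -> Z -> R;
  dist_eq0 : forall x y, dist x y = 0 <-> x = y;
  dist_sym : forall x y, dist x y = dist y x;
  dist_tri : forall x y z, dist x z <= dist x y + dist y z
}.
Arguments dist {Z} m x y.

Definition metric_open {Z} (m : metric Z) (W : Z -> Prop) : Prop :=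
  forall z, W z -> exists eps, 0 < eps /\ forall w, dist m z w < eps -> W w.

Lemma metric_open_full {Z} (m : metric Z) : metric_open m (fun _ => True).
Proof. intros z _; exists 1; split; [lra| auto]. Qed.

Lemma metric_open_inter {Z} (m : metric Z) A B :
  metric_open m A -> metric_open m B -> metric_open m (fun x => A x /\ B x).
Proof.
  intros HA HB z [Az Bz].
  destruct (HA z Az) as [e1 [He1 H1]]; destruct (HB z Bz) as [e2 [He2 H2]].
  exists (Rmin e1 e2); split; [apply Rmin_glb_lt; auto|].
  intros w Hw; split; [apply H1| apply H2];
  eapply Rlt_le_trans; eauto; [apply Rmin_l| apply Rmin_r].
Qed.

Lemma metric_open_union {Z} (m : metric Z) (F : (Z -> Prop) -> Prop) :
  (forall A, F A -> metric_open m A) ->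
  metric_open m (fun x => exists A, F A /\ A x).
Proof.
  intros HF z [A [FA Az]]. destruct (HF A FA z Az) as [e [He H]].
  exists e; split; auto. intros w Hw; exists A; auto.
Qed.

Definition metric_top {Z} (m : metric Z) : topology Z :=
  @Topology _ (metric_open m) (metric_open_full m) (metric_open_inter m)
           (metric_open_union m).

Definition quasicontinuous_at {T Z} (tT : topology T) (tZ : topology Z)
  (g : T -> Z) (a : T) : Prop :=
  forall U W, nbhd tT a U -> nbhd tZ (g a) W ->
    exists O, open tT O /\ (exists x, O x) /\ (forall x, O x -> U x) /\
              (forall x, O x -> W (g x)).

Definition quasicontinuous {T Z} (tT : topology T) (tZ : topology Z)
  (g : T -> Z) : Prop := forall a, quasicontinuous_at tT tZ g a.

(** Cliquishness of g : T -> (Z,d) at t.  "diam (g(O)) <= eps" is written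
    as: all pairwise distances of points of g(O) are <= eps. *)
Definition cliquish_at {T Z} (tT : topology T) (m : metric Z)
  (g : T -> Z) (t : T) : Prop :=
  forall eps U, 0 < eps -> nbhd tT t U ->
    exists O, open tT O /\ (exists x, O x) /\ (forall x, O x -> U x) /\
      (forall x x', O x -> O x' -> dist m (g x) (g x') <= eps).

Definition cliquish {T Z} (tT : topology T) (m : metric Z) (g : T -> Z) : Prop :=
  forall t, cliquish_at tT m g t.

Definition has_countable_pseudobase {X} (t : topology X) : Prop :=
  exists B : nat -> X -> Prop,
    (forall n, open t (B n) /\ exists x, B n x) /\
    (forall O, open t O -> (exists x, O x) ->
       exists n, forall x, B n x -> O x).

(* Fix a point (a, b), a rectangle A x B around it and eps > 0.  Choose y0 in
   D meeting B and a countable pseudobase (B_k) of a neighbourhood of y0.  For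
   x in Q /\ A, cliquishness of f_x at y0 yields some B_k inside B on which f_x
   oscillates by at most eps/4, so Q /\ A is covered by countably many sets E_k;
   since Q is a dense Baire subspace, some E_k is dense in a nonempty open
   O inside A.  Quasicontinuity of the sections f^y lets every point of
   O x B_k be approximated, along its horizontal line, by points of E_k, and
   going through one fixed point (p0, y1) the oscillation of f on a small
   rectangle P x B_k is at most eps. *)

From Stdlib Require Import Reals Lra Classical.
From Stdlib Require Import FunctionalExtensionality PropExtensionality.
Open Scope R_scope.

Definition dense_in {T} (t : topology T) (E O : T -> Prop) : Prop :=
  forall P, open t P -> (exists x, P x /\ O x) -> exists x, P x /\ O x /\ E x.

Definition diam_le {T Z} (m : metric Z) (g : T -> Z) (S : T -> Prop) (e : R) :
  Prop := forall x x', S x -> S x' -> dist m (g x) (g x') <= e.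

Definition val_image {Y} {N : Y -> Prop} (S : {y | N y} -> Prop) (y : Y) : Prop :=
  exists q, S q /\ proj1_sig q = y.

Lemma open_ext {T} (t : topology T) (A B : T -> Prop) :
  open t A -> (forall x, A x <-> B x) -> open t B.
Proof.
  intros HA HAB. replace B with A; [exact HA|].
  apply functional_extensionality; intro x; apply propositional_extensionality, HAB.
Qed.

Lemma subspace_open_trace {X} (t : topology X) (Q O : X -> Prop) :
  open t O -> open (subspace t Q) (fun q => O (proj1_sig q)).
Proof. intros HO; exists O; split; [exact HO | tauto]. Qed.

Lemma product_open_rectangle {X Y} (tX : topology X) (tY : topology Y) A B :
  open tX A -> open tY B -> open (product tX tY) (fun p => A (fst p) /\ B (snd p)).
Proof. intros HA HB p [Ap Bp]; exists A, B; repeat split; auto. Qed.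

Lemma val_image_open {Y} (t : topology Y) (N ON : Y -> Prop) (S : {y | N y} -> Prop) :
  open (subspace t N) S -> open t ON -> (forall y, ON y -> N y) ->
  (forall y, val_image S y -> ON y) -> open t (val_image S).
Proof.
  intros [OS [HOS HS]] HON ONN SON.
  apply (open_ext t (fun y => OS y /\ ON y)); [apply open_inter; assumption|].
  intros y; split.
  - intros [OSy ONy]. exists (exist _ y (ONN y ONy)); split; [apply HS; exact OSy | reflexivity].
  - intros Sy. split; [|exact (SON y Sy)].
    destruct Sy as [q [Sq <-]]. apply HS, Sq.
Qed.

Lemma metric_ball_nbhd {Z} (m : metric Z) z r :
  0 < r -> nbhd (metric_top m) z (fun w => dist m z w < r).
Proof.
  intros Hr. exists (fun w => dist m z w < r); split; [|split; [|auto]].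
  - intros w Hw. exists (r - dist m z w); split; [lra|].
    intros u Hu. pose proof (dist_tri _ m z w u). lra.
  - assert (dist m z z = 0) by (apply dist_eq0; reflexivity). lra.
Qed.

Lemma quasicontinuous_at_ball {T Z} (tT : topology T) (m : metric Z) (g : T -> Z) x U r :
  quasicontinuous_at tT (metric_top m) g x -> open tT U -> U x -> 0 < r ->
  exists P, open tT P /\ (exists p, P p) /\ (forall p, P p -> U p) /\
    forall p, P p -> dist m (g x) (g p) < r.
Proof.
  intros Hq HU Ux Hr.
  destruct (Hq U (fun w => dist m (g x) w < r)) as [P HP];
    [exists U; auto | apply metric_ball_nbhd, Hr | exists P; exact HP].
Qed.

Lemma quasicontinuous_dense_approx {T Z} (tT : topology T) (m : metric Z) (g : T -> Z)
    (E O P : T -> Prop) x r :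
  quasicontinuous_at tT (metric_top m) g x -> open tT P -> P x ->
  (forall p, P p -> O p) -> dense_in tT E O -> 0 < r ->
  exists z, E z /\ P z /\ dist m (g x) (g z) < r.
Proof.
  intros Hq HP Px PO HE Hr.
  destruct (quasicontinuous_at_ball tT m g x P r Hq HP Px Hr)
    as [P1 [HP1 [[w P1w] [P1P Hclose]]]].
  destruct (HE P1 HP1) as [z [P1z [_ Ez]]]; [exists w; auto|].
  exists z; auto.
Qed.

Lemma baire_somewhere_dense {T} (t : topology T) (E : nat -> T -> Prop) (A : T -> Prop) :
  baire t -> open t A -> (exists x, A x) -> (forall x, A x -> exists k, E k x) ->
  exists k O, open t O /\ (exists x, O x) /\ (forall x, O x -> A x) /\
    dense_in t (E k) O.
Proof.
  intros Hb HA HAne Hcov. apply NNPP; intro Hno.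
  (* G k is the interior of the complement of E k /\ A. *)
  pose (G k x := exists S, (open t S /\ forall z, S z -> A z -> ~ E k z) /\ S x).
  assert (HG : forall k, open t (G k) /\ dense t (G k)).
  { intro k; split; [apply open_union; intros S [HS _]; exact HS|].
    intros S HS [s Ss]. apply NNPP; intro Hn.
    assert (HSE : exists q, S q /\ A q /\ E k q).
    { apply NNPP; intro Hz. apply Hn. exists s; split; [exact Ss|].
      exists S; split; [split; [exact HS|]|exact Ss].
      intros z Sz Az Ez; apply Hz; exists z; auto. }
    destruct HSE as [q [Sq [Aq Eq]]].
    apply Hno. exists k, (fun x => S x /\ A x).
    split; [apply open_inter; assumption|].
    split; [exists q; auto|]. split; [tauto|].
    intros P HP [x [Px [Sx Ax]]]. apply NNPP; intro Hz. apply Hn.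
    exists x; split; [exact Sx|].
    exists (fun z => P z /\ S z); split; [split|split; assumption].
    - apply open_inter; assumption.
    - intros z [Pz Sz] Az Ez. apply Hz. exists z; auto. }
  destruct (Hb G HG A HA HAne) as [x [Ax Gx]].
  destruct (Hcov x Ax) as [k Ek]. destruct (Gx k) as [S [[_ HS] Sx]].
  exact (HS x Sx Ax Ek).
Qed.

Lemma dense_baire_subspace_somewhere_dense {X} (t : topology X) (Q : X -> Prop)
    (E : nat -> X -> Prop) (A : X -> Prop) :
  dense t Q -> baire (subspace t Q) -> open t A -> (exists x, A x) ->
  (forall x, Q x -> A x -> exists k, E k x) ->
  exists k O, open t O /\ (exists x, O x) /\ (forall x, O x -> A x) /\
    dense_in t (E k) O.
Proof.
  intros HQ HQb HA HAne Hcov.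
  destruct (baire_somewhere_dense (subspace t Q) (fun k q => E k (proj1_sig q))
              (fun q => A (proj1_sig q)) HQb (subspace_open_trace t Q A HA))
    as [k [O' [[OS [HOS HO']] [[q O'q] [O'A HE]]]]].
  - destruct (HQ A HA HAne) as [x [Ax Qx]]. exists (exist _ x Qx); exact Ax.
  - intros q Aq. exact (Hcov _ (proj2_sig q) Aq).
  - exists k, (fun x => OS x /\ A x).
    split; [apply open_inter; assumption|].
    split; [exists (proj1_sig q); split; [apply HO'|apply O'A]; exact O'q|].
    split; [tauto|].
    intros P HP [x [Px [OSx Ax]]].
    destruct (HQ (fun x => P x /\ OS x /\ A x)) as [x1 [[Px1 [OSx1 _]] Qx1]];
      [repeat apply open_inter; assumption | exists x; auto|].
    destruct (HE _ (subspace_open_trace t Q P HP)) as [z [Pz [O'z Ez]]];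
      [exists (exist _ x1 Qx1); split; [exact Px1 | apply HO'; exact OSx1]|].
    exists (proj1_sig z). split; [exact Pz|].
    split; [split; [apply HO' | apply O'A]; exact O'z | exact Ez].
Qed.

Lemma cliquish_at_pseudobase {Y Z} (t : topology Y) (m : metric Z) (g : Y -> Z)
    (N V : Y -> Prop) (Bs : nat -> {y | N y} -> Prop) y0 eps :
  (forall O, open (subspace t N) O -> (exists q, O q) -> exists k, forall q, Bs k q -> O q) ->
  cliquish_at t m g y0 -> 0 < eps -> open t V -> V y0 -> (forall y, V y -> N y) ->
  exists k, (forall y, val_image (Bs k) y -> V y) /\ diam_le m g (val_image (Bs k)) eps.
Proof.
  intros Hcov Hg Heps HV Vy0 VN.
  destruct (Hg eps V Heps) as [W [HW [[w Ww] [WV Wdiam]]]]; [exists V; auto|].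
  destruct (Hcov _ (subspace_open_trace t N W HW)) as [k Hk];
    [exists (exist _ w (VN w (WV w Ww))); exact Ww|].
  assert (BW : forall y, val_image (Bs k) y -> W y)
    by (intros y [q [Bq <-]]; exact (Hk q Bq)).
  exists k; split; [intros y Hy; exact (WV y (BW y Hy))|].
  intros y y' Hy Hy'; exact (Wdiam y y' (BW y Hy) (BW y' Hy')).
Qed.

Lemma diam_le_rectangle {X Y Z} (tX : topology X) (m : metric Z) (f : X * Y -> Z)
    (E O : X -> Prop) (W : Y -> Prop) delta eps :
  (forall y, quasicontinuous tX (metric_top m) (fun x => f (x, y))) ->
  open tX O -> (exists x, O x) -> (exists y, W y) -> dense_in tX E O ->
  (forall z, E z -> diam_le m (fun y => f (z, y)) W delta) -> 2 * delta < eps ->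
  exists P, open tX P /\ (exists x, P x) /\ (forall x, P x -> O x) /\
    diam_le m f (fun p => P (fst p) /\ W (snd p)) eps.
Proof.
  intros Hqc HO [p0 Op0] [y1 Wy1] HE HW Hlt.
  set (r := (eps - 2 * delta) / 4). assert (Hr : 0 < r) by (unfold r; lra).
  destruct (quasicontinuous_at_ball tX m _ p0 O r (Hqc y1 p0) HO Op0 Hr)
    as [P [HP [HPne [PO Hp0]]]].
  assert (Hcenter : forall x y, P x -> W y -> dist m (f (x, y)) (f (p0, y1)) < 2 * r + delta).
  { intros x y Px Wy.
    destruct (quasicontinuous_dense_approx tX m _ E O P x r (Hqc y x) HP Px PO HE Hr)
      as [z [Ez [Pz Hxz]]].
    pose proof (HW z Ez y y1 Wy Wy1). pose proof (Hp0 z Pz).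
    pose proof (dist_tri _ m (f (x, y)) (f (z, y)) (f (p0, y1))).
    pose proof (dist_tri _ m (f (z, y)) (f (z, y1)) (f (p0, y1))).
    rewrite (dist_sym _ m (f (z, y1))) in *. simpl in *. lra. }
  exists P; split; [exact HP|]. split; [exact HPne|]. split; [exact PO|].
  intros [x y] [x' y'] [Px Wy] [Px' Wy']; simpl in *.
  pose proof (Hcenter x y Px Wy). pose proof (Hcenter x' y' Px' Wy').
  pose proof (dist_tri _ m (f (x, y)) (f (p0, y1)) (f (x', y'))).
  rewrite (dist_sym _ m (f (p0, y1))) in *. unfold r in *. lra.
Qed.

Theorem theorem4p2 (X Y Z : Type) (tX : topology X) (tY : topology Y)
  (m : metric Z) (f : X * Y -> Z) :
  baire tX ->
  (forall y : Y, quasicontinuous tX (metric_top m) (fun x => f (x, y))) ->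
  (exists D : Y -> Prop, dense tY D /\
     forall y, D y ->
       (exists Q : X -> Prop, dense tX Q /\ baire (subspace tX Q) /\
          forall x, Q x -> cliquish_at tY m (fun y' => f (x, y')) y) /\
       (exists N : Y -> Prop, nbhd tY y N /\
          has_countable_pseudobase (subspace tY N))) ->
  cliquish (product tX tY) m f.
Proof.
  intros _ Hqc [D [HD HDy]] [a b] eps U Heps [OU [HOU [OUab OUU]]].
  destruct (HOU (a, b) OUab) as [A [B [HA [HB [Aa [Bb AB]]]]]]; simpl in Aa, Bb.
  destruct (HD B HB (ex_intro _ b Bb)) as [y0 [By0 Dy0]].
  destruct (HDy y0 Dy0)
    as [[Q [HQ [HQb HQc]]] [N [[ON [HON [ONy0 ONN]]] [Bs [HBs HBcov]]]]].
  set (V y := B y /\ ON y).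
  set (E k x := (forall y, val_image (Bs k) y -> V y) /\
                diam_le m (fun y => f (x, y)) (val_image (Bs k)) (eps / 4)).
  destruct (dense_baire_subspace_somewhere_dense tX Q E A HQ HQb HA (ex_intro _ a Aa))
    as [k [O [HO [HOne [OA HEO]]]]].
  { intros x Qx _. apply (cliquish_at_pseudobase tY m _ N V Bs y0).
    - exact HBcov.
    - exact (HQc x Qx).
    - lra.
    - apply open_inter; assumption.
    - split; assumption.
    - intros y [_ ONy]; exact (ONN y ONy). }
  destruct (HEO _ (open_full _ tX)) as [z [_ [_ [BV _]]]];
    [destruct HOne as [x Ox]; exists x; auto|].
  assert (HW : open tY (val_image (Bs k))).
  { apply (val_image_open tY N ON); [apply HBs | exact HON | exact ONN |].
    intros y Hy; apply BV, Hy. }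
  destruct (HBs k) as [_ [q Bq]].
  assert (HWne : exists y, val_image (Bs k) y) by (exists (proj1_sig q), q; auto).
  assert (HEk : forall x, E k x -> diam_le m (fun y => f (x, y)) (val_image (Bs k)) (eps / 4))
    by (intros x [_ Hx]; exact Hx).
  destruct (diam_le_rectangle tX m f (E k) O (val_image (Bs k)) (eps / 4) eps
              Hqc HO HOne HWne HEO HEk ltac:(lra))
    as [P [HP [[p Pp] [PO Hdiam]]]].
  exists (fun p => P (fst p) /\ val_image (Bs k) (snd p)).
  split; [apply product_open_rectangle; assumption|].
  split; [exists (p, proj1_sig q); split; [exact Pp | exists q; auto]|].
  split; [|exact Hdiam].
  intros [x y] [Px Wy]. apply OUU, AB; [exact (OA x (PO x Px)) | exact (proj1 (BV y Wy))].
Qed.
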